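(* Let $X=\{X(t),\ t\ge 0\}$ be a stochastic process and suppose that for every $q\in\mathbb{R}$ the limit $$\tau(q)=\lim_{t\to\infty}\frac{\log \mathbb{E}|X(t)|^q}{\log t}$$ exists in $(-\infty,+\infty]$ (with $\tau(q)=+\infty$ if $\mathbb{E}|X(t)|^q=\infty$ for all large $t$). Let $\mathcal{D}_\tau=\{q\in\mathbb{R}:\tau(q)<\infty\}$. Then: (i) $\tau$ is convex. (ii) $q\mapsto \tau(q)/q$ is nondecreasing on $\mathcal{D}_\tau\setminus\{0\}$. (iii) If $\tau(q')\ge 0$ for some $q'>0$, then $\tau(q)\ge 0$ for every $q\ge q'$ and $\tau$ is nondecreasing on $\mathcal{D}_\tau\cap[q',\infty)$. In particular, if $\tau(q)\ge 0$ for every $q>0$, then $\tau$ is nondecreasing on $\mathcal{D}_\tau\cap[0,\infty)$. (iv) For every $q<0$, $$\tau(q)\ \ge\ q\,\inf_{q'>0}\frac{\tau(q')}{q'}.$$ In particular, $\tau(q)\ge -\tau(-q)$ for every $q<0$.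
   Context: $\tau$ is called the scaling function of $X$; note $\tau(0)=0$. Absolute moments of negative order $\mathbb{E}|X(t)|^q$, $q<0$, are allowed and may be infinite. *)

From HB Require Import structures.
From mathcomp Require Import all_boot all_order all_algebra.
From mathcomp Require Import all_classical all_reals all_analysis.
Set Implicit Arguments. Unset Strict Implicit. Unset Printing Implicit Defensive.
Import Order.TTheory GRing.Theory Num.Theory.
Local Open Scope classical_set_scope.
Local Open Scope ring_scope.

(* |x|^q as an extended real: 0^q = +oo for q < 0, 0^0 = 1, 0^q = 0 for q > 0. *)
Definition abspow {R : realType} (x q : R) : \bar R :=
  if (x == 0) && (q < 0) then +oo%E else (`|x| `^ q)%:E.

Definition logE {R : realType} (x : \bar R) : \bar R :=
  match x with
  | EFin r => if r == 0 then -oo%E else (ln r)%:E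
  | +oo%E => +oo%E
  | -oo%E => -oo%E
  end.

Definition absmoment {d : measure_display} {T : measurableType d} {R : realType}
  (P : probability T R) (X : R -> T -> R) (t q : R) : \bar R :=
  (\int[P]_w abspow (X t w) q)%E.

Definition scaling_ratio {d : measure_display} {T : measurableType d} {R : realType}
  (P : probability T R) (X : R -> T -> R) (q t : R) : \bar R :=
  (logE (absmoment P X t q) * ((ln t)^-1)%:E)%E.

From HB Require Import structures.
From mathcomp Require Import all_boot all_order all_algebra.
From mathcomp Require Import all_classical all_reals all_analysis.
From mathcomp Require Import measurable_realfun ring lra.
Set Implicit Arguments. Unset Strict Implicit. Unset Printing Implicit Defensive.
Import Order.TTheory GRing.Theory Num.Theory.
Local Open Scope classical_set_scope.
Local Open Scope ring_scope.

(* Young's inequality applied pointwise gives Hoelder's inequality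
   E|X(t)|^(l q1 + (1-l) q2) <= (E|X(t)|^q1)^l (E|X(t)|^q2)^(1-l), i.e. q |-> log E|X(t)|^q
   is convex.  Dividing by log t > 0 and letting t -> +oo, tau is convex, and tau(0) = 0
   because E|X(t)|^0 = 1.  The rest holds for any convex tau vanishing at 0: the slope
   tau(q)/q of the chord from the origin is nondecreasing, which gives (ii) and (iv), and
   tau(q') <= (q'/q) tau(q) for 0 < q' < q, which gives (iii). *)

Section AbsPow.
Context {R : realType}.
Implicit Types (a b x q l : R).

Lemma young_powR a b l : 0 <= a -> 0 <= b -> 0 < l -> l < 1 ->
  a `^ l * b `^ (1 - l) <= l * a + (1 - l) * b.
Proof.
move=> a0 b0 l0 l1; have l0' : 0 < 1 - l by rewrite subr_gt0.
have := @conjugate_powR R (a `^ l) (b `^ (1 - l)) l^-1 (1 - l)^-1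
  (powR_ge0 _ _) (powR_ge0 _ _).
rewrite !invr_gt0 l0 l0' !invrK => /(_ isT isT (subrKC _ _)).
by rewrite -!powRrM !mulfV ?gt_eqF// !powRr1// [_ * l]mulrC [_ * (1 - l)]mulrC.
Qed.

Lemma young_powR_scaled (u v A B l : R) : 0 <= u -> 0 <= v -> 0 < A -> 0 < B ->
  0 < l -> l < 1 ->
  u `^ l * v `^ (1 - l) <= A `^ l * B `^ (1 - l) * (l / A * u + (1 - l) / B * v).
Proof.
move=> u0 v0 A0 B0 l0 l1.
have uA : 0 <= u / A by rewrite divr_ge0// ltW.
have vB : 0 <= v / B by rewrite divr_ge0// ltW.
have -> : u `^ l * v `^ (1 - l) =
    A `^ l * B `^ (1 - l) * ((u / A) `^ l * (v / B) `^ (1 - l)).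
  rewrite -{1}(divfK (lt0r_neq0 A0) u) -{1}(divfK (lt0r_neq0 B0) v).
  by rewrite (powRM l uA (ltW A0)) (powRM _ vB (ltW B0)); ring.
rewrite ler_wpM2l ?mulr_ge0 ?powR_ge0// mulrAC -mulrA [(1 - l) / B * v]mulrAC -mulrA.
exact: young_powR.
Qed.

Lemma powR_interpolate a (q1 q2 : R) l : 0 <= a -> 0 < l -> l < 1 ->
  (a != 0) || (0 <= q1) && (0 <= q2) ->
  a `^ (l * q1 + (1 - l) * q2) = (a `^ q1) `^ l * (a `^ q2) `^ (1 - l).
Proof.
move=> a0 l0 l1 /orP[a_neq0|/andP[q1_ge0 q2_ge0]];
  rewrite -!powRrM [l * q1]mulrC [(1 - l) * q2]mulrC.
  by rewrite powRD// a_neq0 implybT.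
have [s0|s0] := eqVneq (q1 * l + q2 * (1 - l)) 0; last first.
  by rewrite powRD// (negbTE s0).
have [-> ->] : q1 = 0 /\ q2 = 0 by split; nra.
by rewrite !mul0r addr0 powRr0 mulr1.
Qed.

Lemma abspow_ge0 x q : (0 <= abspow x q)%E.
Proof. by rewrite /abspow; case: ifP => // _; rewrite lee_fin powR_ge0. Qed.

Lemma abspowE x q : (x != 0) || (0 <= q) -> abspow x q = (`|x| `^ q)%:E.
Proof. by rewrite /abspow => /orP[/negbTE->//|]; rewrite leNgt => /negbTE->; rewrite andbF. Qed.

Lemma abspow0_lt0 q : q < 0 -> abspow 0 q = +oo%E.
Proof. by rewrite /abspow eqxx => ->. Qed.

Lemma measurable_abspow q : measurable_fun [set: R] (fun x => abspow x q).
Proof.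
rewrite /abspow; apply: measurable_fun_ifT.
- apply: (@measurable_and _ _ _ (fun x : R => x == 0) (fun _ => q < 0)).
    exact: measurable_fun_eqr.
  exact: measurable_cst.
- exact: measurable_cst.
- apply: measurableT_comp => //.
  apply: (measurableT_comp (measurable_powR q)).
  exact: normr_measurable.
Qed.

Lemma abspow_interpolate x (q1 q2 A B : R) l : 0 < A -> 0 < B -> 0 < l -> l < 1 ->
  (abspow x (l * q1 + (1 - l) * q2) <= (A `^ l * B `^ (1 - l))%:E *
     ((l / A)%:E * abspow x q1 + ((1 - l) / B)%:E * abspow x q2))%E.
Proof.
move=> A0 B0 l0 l1; have l0' : 0 < 1 - l by rewrite subr_gt0.
have C0 : (0 < (A `^ l * B `^ (1 - l))%:E)%E by rewrite lte_fin mulr_gt0 ?powR_gt0.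
have w1 : (0 < (l / A)%:E)%E by rewrite lte_fin divr_gt0.
have w2 : (0 < ((1 - l) / B)%:E)%E by rewrite lte_fin divr_gt0.
have [/andP[/eqP-> q_lt0]|] := boolP ((x == 0) && ((q1 < 0) || (q2 < 0))).
  suff -> : ((l / A)%:E * abspow 0 q1 + ((1 - l) / B)%:E * abspow 0 q2)%E = +oo%E.
    by rewrite gt0_muley ?leey.
  have wq q w : (0 < w)%E -> (w * abspow 0 q)%E != -oo%E.
    move=> w0; rewrite -ltNye (@lt_le_trans _ _ 0%E) ?ltNy0//.
    by rewrite mule_ge0 ?abspow_ge0 ?ltW.
  case/orP: q_lt0 => q_lt0; rewrite (abspow0_lt0 q_lt0) gt0_muley//.
    by rewrite addye ?wq.
  by rewrite addey ?wq.
rewrite negb_and negb_or -!leNgt => hx.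
have hq1 : (x != 0) || (0 <= q1) by case/orP: hx => [->|/andP[-> _]]; rewrite ?orbT.
have hq2 : (x != 0) || (0 <= q2) by case/orP: hx => [->|/andP[_ ->]]; rewrite ?orbT.
have hq : (x != 0) || (0 <= l * q1 + (1 - l) * q2).
  case/orP: hx => [->//|/andP[q1_ge0 q2_ge0]].
  by apply/orP; right; rewrite addr_ge0// mulr_ge0// ltW.
rewrite !abspowE// -(EFinM (l / A)) -(EFinM ((1 - l) / B)) -EFinD -EFinM lee_fin.
rewrite powR_interpolate//.
  by apply: young_powR_scaled; rewrite ?powR_ge0.
by rewrite normr_eq0.
Qed.

End AbsPow.

Section MomentInterpolation.
Context {d} {T : measurableType d} {R : realType} (mu : {measure set T -> \bar R}).
Local Open Scope ereal_scope.

Lemma integral_abspow_interpolate (f : T -> R) (q1 q2 l A B : R) :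
  measurable_fun setT f -> (0 < A)%R -> (0 < B)%R -> (0 < l)%R -> (l < 1)%R ->
  \int[mu]_w abspow (f w) q1 = A%:E -> \int[mu]_w abspow (f w) q2 = B%:E ->
  \int[mu]_w abspow (f w) (l * q1 + (1 - l) * q2) <= (A `^ l * B `^ (1 - l))%:E.
Proof.
move=> mf A0 B0 l0 l1 hA hB.
have l0' : (0 < 1 - l)%R by rewrite subr_gt0.
have mq q : measurable_fun setT (fun w => abspow (f w) q).
  exact: measurableT_comp (measurable_abspow q) mf.
have wA : 0 <= (l / A)%:E by rewrite lee_fin divr_ge0 ?ltW.
have wB : 0 <= ((1 - l) / B)%:E by rewrite lee_fin divr_ge0 ?ltW.
have wq q w : 0 <= w -> forall x, 0 <= w * abspow (f x) q.
  by move=> w0 x; rewrite mule_ge0 ?abspow_ge0.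
apply: le_trans.
  apply: (@ge0_le_integral _ _ _ mu setT measurableT _
    (fun w => (A `^ l * B `^ (1 - l))%:E *
     ((l / A)%:E * abspow (f w) q1 + ((1 - l) / B)%:E * abspow (f w) q2))).
  - by move=> *; exact: abspow_ge0.
  - exact: mq.
  - by apply/measurable_funeM/emeasurable_funD; exact/measurable_funeM.
  - by move=> w _; exact: abspow_interpolate.
rewrite ge0_integralZl//; last 3 first.
- by apply: emeasurable_funD; exact/measurable_funeM.
- by move=> w _; rewrite adde_ge0 ?wq.
- by rewrite lee_fin mulr_ge0 ?powR_ge0.
rewrite ge0_integralD//; try by move=> *; rewrite wq.
  2, 3: exact/measurable_funeM.
rewrite !(ge0_integralZl _ _ (mq _))//; try by move=> *; exact: abspow_ge0.
rewrite hA hB -(EFinM (l / A)) -(EFinM ((1 - l) / B)) -EFinD -EFinM.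
by rewrite lee_fin !divfK ?gt_eqF// subrKC mulr1.
Qed.

End MomentInterpolation.

Section LogE.
Context {R : realType}.
Local Open Scope ereal_scope.

Lemma logE_EFin_gt0 (A : R) : (0 < A)%R -> logE A%:E = (ln A)%:E.
Proof. by move=> A0; rewrite /logE gt_eqF. Qed.

Lemma logE_le_ln (m : \bar R) (C : R) : 0 <= m -> (0 < C)%R -> m <= C%:E ->
  logE m <= (ln C)%:E.
Proof.
case: m => [a| |] //= a0 C0; rewrite ?leNye// lee_fin => aC.
case: eqP => [_|/eqP a_neq0]; first by rewrite leNye.
by rewrite lee_fin ler_ln ?posrE// lt_neqAle eq_sym a_neq0 -lee_fin.
Qed.

Lemma fin_logE_ratio_gt0 (m : \bar R) (t : R) : (1 < t)%R -> 0 <= m ->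
  logE m * ((ln t)^-1)%:E \is a fin_num -> exists2 A : R, (0 < A)%R & m = A%:E.
Proof.
move=> t1; have lnt_gt0 : (0 < (ln t)^-1)%R by rewrite invr_gt0 ln_gt0.
case: m => [a| |] //= a0; last by rewrite gt0_mulye ?lte_fin.
case: eqP => [->|/eqP a_neq0 _]; first by rewrite gt0_mulNye ?lte_fin.
by exists a; rewrite // lt_neqAle eq_sym a_neq0 -lee_fin.
Qed.

End LogE.

Section ScalingRatio.
Context {d} {T : measurableType d} {R : realType} (P : probability T R)
  (X : R -> T -> R).
Local Open Scope ereal_scope.

Lemma absmoment_ge0 t q : 0 <= absmoment P X t q.
Proof. by apply: integral_ge0 => w _; exact: abspow_ge0. Qed.

Lemma scaling_ratio0 t : scaling_ratio P X 0 t = 0.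
Proof.
rewrite /scaling_ratio /absmoment.
under eq_integral do rewrite /abspow ltxx andbF powRr0.
rewrite integral_cst// [X in logE X](_ : _ = 1); last by rewrite mul1e; exact: probability_setT.
by rewrite logE_EFin_gt0// ln1 mul0e.
Qed.

Lemma scaling_ratio_convex t (q1 q2 l : R) : measurable_fun setT (X t) ->
  (1 < t)%R -> (0 < l)%R -> (l < 1)%R ->
  scaling_ratio P X q1 t \is a fin_num -> scaling_ratio P X q2 t \is a fin_num ->
  scaling_ratio P X (l * q1 + (1 - l) * q2) t <=
    l%:E * scaling_ratio P X q1 t + (1 - l)%:E * scaling_ratio P X q2 t.
Proof.
move=> mX t1 l0 l1 f1 f2.
have [A A0 eA] := fin_logE_ratio_gt0 t1 (absmoment_ge0 t q1) f1.
have [B B0 eB] := fin_logE_ratio_gt0 t1 (absmoment_ge0 t q2) f2.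
have C0 : (0 < A `^ l * B `^ (1 - l))%R by rewrite mulr_gt0 ?powR_gt0.
have hM := integral_abspow_interpolate mX A0 B0 l0 l1 eA eB.
have hL := logE_le_ln (absmoment_ge0 t (l * q1 + (1 - l) * q2)) C0 hM.
rewrite /scaling_ratio eA eB !logE_EFin_gt0//.
apply: le_trans (lee_wpmul2r _ hL) _; first by rewrite lee_fin invr_ge0 ltW// ln_gt0.
rewrite lnM ?posrE ?powR_gt0// !ln_powR -!EFinM -EFinD lee_fin.
by rewrite mulrDl !mulrA.
Qed.

End ScalingRatio.

Section ScalingFunction.
Context {d} {T : measurableType d} {R : realType} (P : probability T R)
  (X : R -> T -> R) (tau : R -> \bar R)
  (hX : forall t, (0 <= t)%R -> measurable_fun setT (X t))
  (htau : forall q, tau q != -oo%E /\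
            scaling_ratio P X q t @[t --> +oo] --> tau q).
Local Open Scope ereal_scope.

Lemma tau0 : tau 0 = 0.
Proof.
have ratio0 : (fun t => scaling_ratio P X 0 t) = cst 0 := funext (scaling_ratio0 P X).
have : scaling_ratio P X 0 t @[t --> +oo%R] --> 0 by rewrite ratio0; exact: cvg_cst.
exact: cvg_unique (htau 0).2.
Qed.

Lemma tau_convex (q1 q2 l : R) : (0 < l)%R -> (l < 1)%R ->
  tau (l * q1 + (1 - l) * q2)%R <= l%:E * tau q1 + (1 - l)%:E * tau q2.
Proof.
move=> l0 l1; have l0' : (0 < 1 - l)%R by rewrite subr_gt0.
have wNy q w : (0 < w)%R -> w%:E * tau q != -oo.
  by move: (htau q).1; case: (tau q) => // *; rewrite gt0_muley ?lte_fin.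
have [h1 h2] := ((htau q1).2, (htau q2).2).
case E1: (tau q1) h1 => [r1| |] h1; last by move: (htau q1).1; rewrite E1.
  2: by rewrite gt0_muley ?lte_fin// addye ?leey ?wNy.
case E2: (tau q2) h2 => [r2| |] h2; last by move: (htau q2).1; rewrite E2.
  2: by rewrite [X in _ + X]gt0_muley ?lte_fin// addey ?leey// -EFinM.
have hg : l%:E * scaling_ratio P X q1 t + (1 - l)%:E * scaling_ratio P X q2 t
    @[t --> +oo%R] --> l%:E * r1%:E + (1 - l)%:E * r2%:E.
  by apply: cvgeD; [rewrite fin_num_adde_defl// -EFinM|exact: cvgeZl|exact: cvgeZl].
apply: (@lee_cvg_to R^o _ _ _ _ _ _ _ (htau _).2 hg); near=> t.
have t1 : (1 < t)%R by near: t; apply: nbhs_pinfty_gt; rewrite num_real.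
apply: scaling_ratio_convex => //; first by apply: hX; rewrite ltW// (lt_trans ltr01).
- by near: t; exact: (cvg_is_fine h1).
- by near: t; exact: (cvg_is_fine h2).
Unshelve. all: end_near.
Qed.

End ScalingFunction.

Section ConvexVanishingAtZero.
Context {R : realType} (f : R -> \bar R).
Hypothesis f_convex : forall q1 q2 l : R, 0 < l -> l < 1 ->
  (f (l * q1 + (1 - l) * q2) <= l%:E * f q1 + (1 - l)%:E * f q2)%E.
Hypothesis f0 : f 0 = 0%E.
Hypothesis fNy : forall q, f q != -oo%E.

Lemma convex_scale_le (q l : R) : 0 < l -> l < 1 -> (f (l * q) <= l%:E * f q)%E.
Proof.
move=> l0 l1; have := f_convex q 0 l0 l1.
by rewrite mulr0 addr0 f0 mule0 adde0.
Qed.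

Lemma convex_chord (a b c ra rb rc : R) : a < b -> b < c ->
  f a = ra%:E -> f b = rb%:E -> f c = rc%:E ->
  rb * (c - a) <= (c - b) * ra + (b - a) * rc.
Proof.
move=> ab bc fa fb fc; have ca_gt0 : 0 < c - a by rewrite subr_gt0 (lt_trans ab).
have l0 : 0 < (c - b) / (c - a) by rewrite divr_gt0// subr_gt0.
have l1 : (c - b) / (c - a) < 1 by rewrite ltr_pdivrMr// mul1r ltrD2l ltrN2.
have := f_convex a c l0 l1.
have -> : (c - b) / (c - a) * a + (1 - (c - b) / (c - a)) * c = b.
  by field; rewrite gt_eqF.
rewrite fa fb fc -!EFinM -EFinD lee_fin -(ler_pM2r ca_gt0) => /le_trans; apply.
by rewrite le_eqVlt; apply/orP; left; apply/eqP; field; rewrite gt_eqF.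
Qed.

Lemma convex_slope_le (a b ra rb : R) : f a = ra%:E -> f b = rb%:E ->
  a != 0 -> b != 0 -> a <= b -> ra / a <= rb / b.
Proof.
move=> fa fb a_neq0 b_neq0; rewrite le_eqVlt => /predU1P[ab|ab].
  by move: fb; rewrite -ab fa => -[->].
set sa := ra / a; set sb := rb / b.
have ra_sa : ra = sa * a by rewrite divfK.
have rb_sb : rb = sb * b by rewrite divfK.
have [a_lt0|a_gt0|a0] := ltgtP a 0; last by rewrite a0 eqxx in a_neq0.
- have [b_lt0|b_gt0|b0] := ltgtP b 0; last by rewrite b0 eqxx in b_neq0.
  + have ab_gt0 : 0 < a * b by rewrite nmulr_rgt0.
    have := convex_chord ab b_lt0 fa fb f0; rewrite ra_sa rb_sb; nra.
  + have ab_lt0 : a * b < 0 by rewrite nmulr_rlt0.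
    have := convex_chord a_lt0 b_gt0 fa f0 fb; rewrite ra_sa rb_sb; nra.
- have ab_gt0 : 0 < a * b by rewrite mulr_gt0// (lt_trans a_gt0).
  have := convex_chord a_gt0 ab f0 fa fb; rewrite ra_sa rb_sb; nra.
Qed.

Lemma convex_ge0_from (q' : R) : 0 < q' -> (0 <= f q')%E ->
  forall q, q' <= q -> (0 <= f q)%E.
Proof.
move=> q'_gt0 fq'_ge0 q; rewrite le_eqVlt => /predU1P[<-//|q'q].
have q_gt0 : 0 < q := lt_trans q'_gt0 q'q.
have := @convex_scale_le q (q' / q); rewrite divr_gt0// ltr_pdivrMr// mul1r divfK ?gt_eqF//.
by move=> /(_ isT q'q) /(le_trans fq'_ge0); rewrite pmule_rge0// lte_fin divr_gt0.
Qed.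

Lemma convex_le_from (q' : R) : 0 < q' -> (0 <= f q')%E ->
  forall q1 q2, q' <= q1 -> q1 <= q2 -> (f q1 <= f q2)%E.
Proof.
move=> q'_gt0 fq'_ge0 q1 q2 q'q1; rewrite le_eqVlt => /predU1P[<-//|q1q2].
have q1_gt0 : 0 < q1 := lt_le_trans q'_gt0 q'q1.
have q2_gt0 : 0 < q2 := lt_trans q1_gt0 q1q2.
have fq2_ge0 := convex_ge0_from q'_gt0 fq'_ge0 (le_trans q'q1 (ltW q1q2)).
have := @convex_scale_le q2 (q1 / q2); rewrite divr_gt0// ltr_pdivrMr// mul1r divfK ?gt_eqF//.
move=> /(_ isT q1q2) /le_trans; apply; apply: gee_pMl => //.
by rewrite lee_fin ler_pdivrMr// mul1r ltW.
Qed.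

Lemma convex_le_ge0 (q1 q2 : R) : (forall q, 0 < q -> (0 <= f q)%E) ->
  0 <= q1 -> q1 <= q2 -> (f q1 <= f q2)%E.
Proof.
move=> f_ge0; rewrite le_eqVlt => /predU1P[<- q2_ge0|q1_gt0 q1q2].
  by rewrite f0; move: q2_ge0; rewrite le_eqVlt => /predU1P[<-|/f_ge0]; rewrite ?f0.
exact: (convex_le_from q1_gt0 (f_ge0 _ q1_gt0) (lexx q1) q1q2).
Qed.

Lemma convex_ge_slope_inf (q : R) : q < 0 ->
  (q%:E * ereal_inf [set (f q' * (q'^-1)%:E)%E | q' in [set x : R | (0 < x)%R]] <= f q)%E.
Proof.
move=> q_lt0; case fq: (f q) => [r| |]; [|by rewrite leey|by move: (fNy q); rewrite fq].
rewrite -lee_ndivrMl//; apply: le_ereal_inf_tmp => _ [q' q'_gt0 <-].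
case fq': (f q') => [r'| |]; last by move: (fNy q'); rewrite fq'.
  2: by rewrite gt0_mulye ?leey// lte_fin invr_gt0.
rewrite -!EFinM lee_fin mulrC.
apply: convex_slope_le fq fq' (ltr0_neq0 q_lt0) (lt0r_neq0 q'_gt0) _.
exact/ltW/(lt_trans q_lt0).
Qed.

Lemma convex_ge_oppN (q : R) : (- f (- q) <= f q)%E.
Proof.
case fNq: (f (- q)) => [s| |]; [|by rewrite leNye|by move: (fNy (- q)); rewrite fNq].
case fq: (f q) => [r| |]; [|by rewrite leey|by move: (fNy q); rewrite fq].
have half_gt0 : 0 < 2^-1 :> R by rewrite invr_gt0.
have half_lt1 : 2^-1 < 1 :> R by rewrite invf_lt1 ?ltr1n.
have := f_convex q (- q) half_gt0 half_lt1.
have -> : 2^-1 * q + (1 - 2^-1) * - q = 0 by field.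
by rewrite f0 fq fNq -!EFinM -EFinD -EFinN !lee_fin => ?; lra.
Qed.

End ConvexVanishingAtZero.

Theorem proposition2p1 (d : measure_display) (T : measurableType d) (R : realType)
  (P : probability T R) (X : R -> T -> R) (tau : R -> \bar R)
  (hX : forall t, 0 <= t -> measurable_fun setT (X t))
  (htau : forall q, tau q != -oo%E /\
            scaling_ratio P X q t @[t --> +oo] --> tau q) :
  (* (i) convexity *)
  (forall q1 q2 l : R, (0 < l)%R && (l < 1)%R ->
     (tau (l * q1 + (1 - l) * q2)%R <= l%:E * tau q1 + (1 - l)%R%:E * tau q2)%E) /\
  (* (ii) tau(q)/q nondecreasing on D_tau \ {0} *)
  (forall q1 q2 r1 r2 : R, tau q1 = r1%:E -> tau q2 = r2%:E ->
     q1 != 0 -> q2 != 0 -> q1 <= q2 -> r1 / q1 <= r2 / q2) /\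
  (* (iii) *)
  (forall q' : R, 0 < q' -> (0 <= tau q')%E ->
     (forall q : R, q' <= q -> (0 <= tau q)%E) /\
     (forall q1 q2 : R, tau q1 != +oo%E -> tau q2 != +oo%E ->
        q' <= q1 -> q1 <= q2 -> (tau q1 <= tau q2)%E)) /\
  ((forall q : R, 0 < q -> (0 <= tau q)%E) ->
     forall q1 q2 : R, tau q1 != +oo%E -> tau q2 != +oo%E ->
        0 <= q1 -> q1 <= q2 -> (tau q1 <= tau q2)%E) /\
  (* (iv) *)
  (forall q : R, q < 0 ->
     (q%:E * ereal_inf [set (tau q' * (q'^-1)%:E)%E | q' in [set x : R | (0 < x)%R]]
        <= tau q)%E) /\
  (forall q : R, q < 0 -> (- tau (- q)%R <= tau q)%E).
Proof.
have tau_cvx := tau_convex hX htau.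
have tau_0 := tau0 htau.
have tauNy q : tau q != -oo%E := (htau q).1.
split; first by move=> q1 q2 l /andP[]; exact: tau_cvx.
split; first exact: (convex_slope_le tau_cvx tau_0).
split.
  move=> q' q'_gt0 tauq'_ge0; split.
    exact: (convex_ge0_from tau_cvx tau_0 q'_gt0 tauq'_ge0).
  by move=> q1 q2 _ _; exact: (convex_le_from tau_cvx tau_0 q'_gt0 tauq'_ge0).
split; first by move=> tau_ge0 q1 q2 _ _; exact: (convex_le_ge0 tau_cvx tau_0 tau_ge0).
split=> q q_lt0; first exact: (convex_ge_slope_inf tau_cvx tau_0 tauNy q_lt0).
exact: (convex_ge_oppN tau_cvx tau_0 tauNy).
Qed.
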